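(* Let $X$ be a hyperbolic approximation with parameter $r$ of a metric space $Z$, and let $v_1,v_2$ be any two vertices of $X$. If $w$ is a branch point of $\{v_1,v_2\}$, then \[\frac{r^2}{4}\,\operatorname{diam}(B(w))\le\operatorname{diam}(B(v_1)\cup B(v_2)),\] i.e. $\frac{r^2}{4}\le\frac{\operatorname{diam}(B(v_1)\cup B(v_2))}{\operatorname{diam}(B(w))}$ whenever $\operatorname{diam}(B(w))>0$.
   Context: Hyperbolic approximation: let $(Z,d)$ be a metric space and fix a parameter $r$ with $0<r\le1/6$. For every $k\in\mathbb{Z}$ choose a maximal $r^k$-separated set $V_k\subset Z$ (distinct points at distance $\ge r^k$, maximal with this property). For $v\in V_k$ let $B(v)$ be the ball in $Z$ of radius $2r^k$ centred at $v$, $\bar B(v)$ the closed ball. The vertex set $V$ consists, for each $k$, of the balls $B(v)$, $v\in V_k$ (equal balls from the same level give the same vertex; equal balls at different levels are different vertices); a vertex from level $k$ has level $l(v)=k$. Two vertices are joined by an edge iff they are on the same level and their closed balls intersect (horizontal edge), or they are on neighbouring levels $k,k+1$ and the ball of the level-$(k+1)$ vertex is contained in the ball of the level-$k$ vertex (radial edge). $X$ carries the path metric with all edges of length $1$. A radial geodesic is an edge path all of whose edges are radial and along which the level function is monotone. For $V'\subset V$, a vertex $u$ is a cone point of $V'$ if $l(u)\le\inf_{v\in V'}l(v)$ and every $v\in V'$ is connected to $u$ by a radial geodesic; a branch point of $V'$ is a cone point of maximal level. *)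

From Stdlib Require Import Reals ZArith.
From Coquelicot Require Import Coquelicot.
Open Scope R_scope.

Definition is_metric {P : Type} (d : P -> P -> R) : Prop :=
  (forall x y, 0 <= d x y) /\
  (forall x y, d x y = 0 <-> x = y) /\
  (forall x y, d x y = d y x) /\
  (forall x y z, d x z <= d x y + d y z).

Definition separated {P : Type} (d : P -> P -> R) (s : R) (S : P -> Prop) : Prop :=
  forall x y, S x -> S y -> x <> y -> s <= d x y.

Definition maximal_separated {P : Type} (d : P -> P -> R) (s : R) (S : P -> Prop) : Prop :=
  separated d s S /\
  (forall W : P -> Prop, separated d s W -> (forall x, S x -> W x) -> forall x, W x -> S x).

Definition hyp_approx_data {P : Type} (d : P -> P -> R) (r : R) (V : Z -> P -> Prop) : Prop :=
  is_metric d /\ 0 < r /\ r <= 1/6 /\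
  forall k : Z, maximal_separated d (powerRZ r k) (V k).

(** A vertex of X is represented by its level k and a centre c in V_k; the
    corresponding ball is B(c) = open ball of radius 2 r^k centred at c.
    Two representations denote the same vertex iff same level and same ball. *)
Definition ball_of {P : Type} (d : P -> P -> R) (r : R) (k : Z) (c : P) : P -> Prop :=
  fun z => d c z < 2 * powerRZ r k.

Definition set_eq {P : Type} (A B : P -> Prop) : Prop := forall z, A z <-> B z.
Definition set_incl {P : Type} (A B : P -> Prop) : Prop := forall z, A z -> B z.

Definition radial_edge {P : Type} (d : P -> P -> R) (r : R) (k : Z) (c c' : P) : Prop :=
  set_incl (ball_of d r (k + 1) c') (ball_of d r k c).

(** There is a radial geodesic between vertex (ku,cu) and vertex (kv,cv) with
    ku <= kv: an edge path with only radial edges along which the level is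
    monotone, i.e. a chain of vertices at levels ku, ku+1, ..., kv = ku+n,
    consecutive ones joined by radial edges. *)
Definition radial_geodesic {P : Type} (d : P -> P -> R) (r : R) (V : Z -> P -> Prop)
    (ku : Z) (cu : P) (kv : Z) (cv : P) : Prop :=
  exists (n : nat) (f : nat -> P),
    kv = (ku + Z.of_nat n)%Z /\
    (forall i, (i <= n)%nat -> V (ku + Z.of_nat i)%Z (f i)) /\
    set_eq (ball_of d r ku (f 0%nat)) (ball_of d r ku cu) /\
    set_eq (ball_of d r kv (f n)) (ball_of d r kv cv) /\
    (forall i, (i < n)%nat -> radial_edge d r (ku + Z.of_nat i)%Z (f i) (f (S i))).

Definition cone_point2 {P : Type} (d : P -> P -> R) (r : R) (V : Z -> P -> Prop)
    (k1 : Z) (c1 : P) (k2 : Z) (c2 : P) (ku : Z) (cu : P) : Prop :=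
  V ku cu /\ (ku <= k1)%Z /\ (ku <= k2)%Z /\
  radial_geodesic d r V ku cu k1 c1 /\ radial_geodesic d r V ku cu k2 c2.

Definition branch_point2 {P : Type} (d : P -> P -> R) (r : R) (V : Z -> P -> Prop)
    (k1 : Z) (c1 : P) (k2 : Z) (c2 : P) (kw : Z) (cw : P) : Prop :=
  cone_point2 d r V k1 c1 k2 c2 kw cw /\
  forall ku cu, cone_point2 d r V k1 c1 k2 c2 ku cu -> (ku <= kw)%Z.

Definition diam {P : Type} (d : P -> P -> R) (A : P -> Prop) : Rbar :=
  Lub_Rbar (fun t => exists x y, A x /\ A y /\ t = d x y).

Definition set_union {P : Type} (A B : P -> Prop) : P -> Prop := fun z => A z \/ B z.

From Stdlib Require Import Reals ZArith Lia Lra Psatz Classical.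
From Coquelicot Require Import Coquelicot.
Open Scope R_scope.

(** If the branch point [w] lies on the level of [v1] or [v2], then [B(w)] is
    contained in [B(v1) ∪ B(v2)].  Otherwise [d(v1, v2) >= r^(l(w)+2)]: every
    vertex is joined by a radial geodesic to an ancestor on any level [m] above
    it whose centre is within [r^m / (1 - r) <= 6/5 r^m] (chain nearest points of
    the maximal separated sets), so if the centres were closer, the ancestor of
    [v1] one level below [w] would be a cone point of [{v1, v2}], contradicting
    the maximality of [l(w)].  Since [diam B(w) <= 4 r^(l(w))], both cases give
    the bound. *)

Lemma powerRZ_succ (r : R) (j : Z) : r <> 0 -> powerRZ r (j + 1) = powerRZ r j * r.
Proof. intros Hr. rewrite powerRZ_add by exact Hr. simpl. ring. Qed.

Section Metric.

Context {P : Type} {d : P -> P -> R} (Hd : is_metric d).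

Lemma dist_xx (x : P) : d x x = 0.
Proof. apply (proj1 (proj2 Hd)). reflexivity. Qed.

Lemma dist_sym (x y : P) : d x y = d y x.
Proof. apply (proj1 (proj2 (proj2 Hd))). Qed.

Lemma dist_triangle (x y z : P) : d x z <= d x y + d y z.
Proof. apply (proj2 (proj2 (proj2 Hd))). Qed.

Lemma maximal_separated_net (s : R) (S : P -> Prop) :
  0 < s -> maximal_separated d s S -> forall x, exists a, S a /\ d a x < s.
Proof.
  intros Hs [Hsep Hmax] x.
  destruct (classic (exists a, S a /\ d a x < s)) as [Hnear | Hfar]; [exact Hnear |].
  assert (Hsep_x : separated d s (fun z => S z \/ z = x)).
  { intros y z [Hy | ->] [Hz | ->] Hyz.
    - now apply Hsep.
    - apply Rnot_lt_le. intros Hlt. apply Hfar. now exists y.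
    - rewrite dist_sym. apply Rnot_lt_le. intros Hlt. apply Hfar. now exists z.
    - now contradiction Hyz. }
  exists x. split.
  - apply (Hmax _ Hsep_x); [now left | now right].
  - now rewrite dist_xx.
Qed.

Lemma ball_of_center (r : R) (k : Z) (c : P) : 0 < r -> ball_of d r k c c.
Proof.
  intros Hr. unfold ball_of. rewrite dist_xx.
  pose proof (powerRZ_lt r k Hr). lra.
Qed.

Lemma radial_edge_of_dist (r : R) (k : Z) (a b : P) :
  d a b + 2 * powerRZ r (k + 1) <= 2 * powerRZ r k -> radial_edge d r k a b.
Proof.
  intros Hab z Hz. unfold ball_of in *.
  pose proof (dist_triangle a b z). lra.
Qed.

End Metric.

Section Diameter.

Context {P : Type} {d : P -> P -> R}.

Lemma diam_ge (A : P -> Prop) (x y : P) :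
  A x -> A y -> Rbar_le (d x y) (diam d A).
Proof.
  intros Hx Hy. apply (Lub_Rbar_correct (fun t => exists x y, A x /\ A y /\ t = d x y)).
  now exists x, y.
Qed.

Lemma diam_le (A : P -> Prop) (M : Rbar) :
  (forall x y, A x -> A y -> Rbar_le (d x y) M) -> Rbar_le (diam d A) M.
Proof.
  intros HM. apply (Lub_Rbar_correct (fun t => exists x y, A x /\ A y /\ t = d x y)).
  intros t (x & y & Hx & Hy & ->). now apply HM.
Qed.

Lemma diam_subset (A B : P -> Prop) : set_incl A B -> Rbar_le (diam d A) (diam d B).
Proof. intros HAB. apply diam_le. intros x y Hx Hy. apply diam_ge; auto. Qed.

Lemma diam_ball_of (r : R) (k : Z) (c : P) : is_metric d -> 0 < r ->
  exists x, diam d (ball_of d r k c) = Finite x /\ 0 <= x <= 4 * powerRZ r k.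
Proof.
  intros Hd Hr.
  assert (Hlow := diam_ge (ball_of d r k c) c c
                    (ball_of_center Hd r k c Hr) (ball_of_center Hd r k c Hr)).
  assert (Hup : Rbar_le (diam d (ball_of d r k c)) (4 * powerRZ r k)).
  { apply diam_le. intros x y Hx Hy. unfold ball_of in *. simpl.
    pose proof (dist_triangle Hd x c y). rewrite (dist_sym Hd x c) in *. lra. }
  destruct (diam d (ball_of d r k c)) as [x | |]; try contradiction.
  exists x. rewrite (dist_xx Hd) in Hlow. auto.
Qed.

End Diameter.

Section RadialGeodesic.

Context {P : Type} {d : P -> P -> R} {r : R} {V : Z -> P -> Prop}.

Lemma radial_geodesic_refl (k : Z) (c : P) : V k c -> radial_geodesic d r V k c k c.
Proof.
  intros Hc. exists 0%nat, (fun _ => c). repeat split; try (simpl; lia); auto.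
  intros i Hi. replace i with 0%nat by lia. now rewrite Z.add_0_r.
Qed.

Lemma radial_geodesic_cons (j : Z) (a b : P) (k : Z) (c : P) :
  V j a -> radial_edge d r j a b -> radial_geodesic d r V (j + 1) b k c ->
  radial_geodesic d r V j a k c.
Proof.
  intros Ha Hab (n & f & Hk & Hf & Hf0 & Hfn & Hedges).
  exists (S n), (fun i => match i with O => a | S i => f i end).
  split; [lia |]. split; [| split; [intros z; tauto | split; [exact Hfn |]]].
  - intros [| i] Hi; [now rewrite Z.add_0_r |].
    replace (j + Z.of_nat (S i))%Z with (j + 1 + Z.of_nat i)%Z by lia. apply Hf. lia.
  - intros [| i] Hi.
    + rewrite Z.add_0_r. intros z Hz. apply Hab, Hf0, Hz.
    + replace (j + Z.of_nat (S i))%Z with (j + 1 + Z.of_nat i)%Z by lia.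
      apply Hedges. lia.
Qed.

Lemma radial_geodesic_same_level (k : Z) (c c' : P) :
  radial_geodesic d r V k c k c' -> set_incl (ball_of d r k c) (ball_of d r k c').
Proof.
  intros (n & f & Hk & _ & Hf0 & Hfn & _) z Hz.
  assert (n = 0%nat) by lia. subst n. apply Hfn, Hf0, Hz.
Qed.

End RadialGeodesic.

Lemma cone_point2_sym {P : Type} (d : P -> P -> R) (r : R) (V : Z -> P -> Prop)
  (k1 : Z) (c1 : P) (k2 : Z) (c2 : P) (m : Z) (u : P) :
  cone_point2 d r V k1 c1 k2 c2 m u -> cone_point2 d r V k2 c2 k1 c1 m u.
Proof. unfold cone_point2. tauto. Qed.

Section HyperbolicApproximation.

Context {P : Type} {d : P -> P -> R} {r : R} {V : Z -> P -> Prop}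
  (HX : hyp_approx_data d r V).

Let Hd : is_metric d := proj1 HX.
Let Hr : 0 < r := proj1 (proj2 HX).
Let Hr6 : r <= 1/6 := proj1 (proj2 (proj2 HX)).
Let Hnet : forall k, maximal_separated d (powerRZ r k) (V k) := proj2 (proj2 (proj2 HX)).

Lemma exists_ancestor_nat (n : nat) : forall j c, V (j + Z.of_nat n) c ->
  exists a, V j a /\ radial_geodesic d r V j a (j + Z.of_nat n) c /\
            d a c <= 6/5 * powerRZ r j.
Proof.
  induction n as [| n IH]; intros j c Hc.
  - rewrite Z.add_0_r in *. exists c. repeat split; auto.
    + now apply radial_geodesic_refl.
    + rewrite (dist_xx Hd). pose proof (powerRZ_lt r j Hr). lra.
  - replace (j + Z.of_nat (S n))%Z with (j + 1 + Z.of_nat n)%Z in * by lia.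
    destruct (IH (j + 1)%Z c Hc) as (b & Hb & Hbc & Hdbc).
    destruct (maximal_separated_net Hd _ _ (powerRZ_lt r j Hr) (Hnet j) b) as (a & Ha & Hab).
    pose proof (powerRZ_lt r j Hr).
    rewrite powerRZ_succ in Hdbc by lra.
    exists a. repeat split; auto.
    + apply radial_geodesic_cons with b; auto.
      apply (radial_edge_of_dist Hd r). rewrite powerRZ_succ by lra. nra.
    + pose proof (dist_triangle Hd a b c). nra.
Qed.

Lemma exists_ancestor (m k : Z) (c : P) : (m <= k)%Z -> V k c ->
  exists a, V m a /\ radial_geodesic d r V m a k c /\ d a c <= 6/5 * powerRZ r m.
Proof.
  intros Hmk Hc.
  replace k with (m + Z.of_nat (Z.to_nat (k - m)))%Z in * by (rewrite Z2Nat.id; lia).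
  now apply exists_ancestor_nat.
Qed.

(** The level-[m] ancestor of [v1] is a cone point; the radial edge to the
    level-[m+1] ancestor of [v2] needs [6/5 + 4.2 r <= 2], i.e. [r <= 4/21]. *)
Lemma cone_point_of_close_lt (m k1 k2 : Z) (c1 c2 : P) :
  V k1 c1 -> V k2 c2 -> (m <= k1)%Z -> (m < k2)%Z -> d c1 c2 < powerRZ r (m + 1) ->
  exists u, cone_point2 d r V k1 c1 k2 c2 m u.
Proof.
  intros Hc1 Hc2 Hmk1 Hmk2 Hclose.
  destruct (exists_ancestor m k1 c1) as (u & Hu & Huc1 & Hdu); auto.
  destruct (exists_ancestor (m + 1) k2 c2) as (b & Hb & Hbc2 & Hdb); auto; try lia.
  exists u. repeat split; auto; try lia.
  apply radial_geodesic_cons with b; auto.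
  pose proof (powerRZ_lt r m Hr).
  apply (radial_edge_of_dist Hd r).
  rewrite powerRZ_succ in * by lra.
  pose proof (dist_triangle Hd u c1 b). pose proof (dist_triangle Hd c1 c2 b).
  rewrite (dist_sym Hd c2 b) in *. nra.
Qed.

Lemma cone_point_of_close (m k1 k2 : Z) (c1 c2 : P) :
  V k1 c1 -> V k2 c2 -> (m <= k1)%Z -> (m <= k2)%Z -> d c1 c2 < powerRZ r (m + 1) ->
  exists u, cone_point2 d r V k1 c1 k2 c2 m u.
Proof.
  intros Hc1 Hc2 Hmk1 Hmk2 Hclose.
  destruct (Z_lt_le_dec m k2) as [Hlt2 | Hle2].
  { now apply cone_point_of_close_lt. }
  destruct (Z_lt_le_dec m k1) as [Hlt1 | Hle1].
  { rewrite dist_sym in Hclose by exact Hd.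
    destruct (cone_point_of_close_lt m k2 k1 c2 c1) as [u Hu]; auto.
    exists u. now apply cone_point2_sym. }
  assert (k1 = m) by lia. assert (k2 = m) by lia. subst k1 k2.
  assert (c1 = c2) as <-.
  { apply NNPP. intros Hne.
    pose proof (proj1 (Hnet m) c1 c2 Hc1 Hc2 Hne).
    pose proof (powerRZ_lt r m Hr).
    rewrite powerRZ_succ in Hclose by lra. nra. }
  exists c1. repeat split; auto; try lia; now apply radial_geodesic_refl.
Qed.

End HyperbolicApproximation.

Theorem lemma3p10 (P : Type) (d : P -> P -> R) (r : R) (V : Z -> P -> Prop)
  (HX : hyp_approx_data d r V)
  (k1 : Z) (c1 : P) (k2 : Z) (c2 : P) (kw : Z) (cw : P)
  (Hv1 : V k1 c1) (Hv2 : V k2 c2)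
  (Hw : branch_point2 d r V k1 c1 k2 c2 kw cw) :
  Rbar_le (Rbar_mult (r ^ 2 / 4) (diam d (ball_of d r kw cw)))
          (diam d (set_union (ball_of d r k1 c1) (ball_of d r k2 c2))).
Proof.
  pose proof HX as (Hd & Hr & Hr6 & _).
  destruct Hw as ((_ & Hkw1 & Hkw2 & Hg1 & Hg2) & Hmaxw).
  destruct (diam_ball_of r kw cw Hd Hr) as (x & Hx & Hx0 & Hx4).
  pose proof (powerRZ_lt r kw Hr).
  assert (Hcoef : Rbar_le (Rbar_mult (r ^ 2 / 4) (diam d (ball_of d r kw cw)))
                          (r ^ 2 * powerRZ r kw)).
  { rewrite Hx. simpl. nra. }
  destruct (classic (kw = k1 \/ kw = k2)) as [Hsame | Hlower].
  - apply Rbar_le_trans with (diam d (ball_of d r kw cw)).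
    + rewrite Hx. simpl. assert (r * r <= 1) by nra. nra.
    + apply diam_subset. intros z Hz.
      destruct Hsame; subst kw; [left | right];
        eapply radial_geodesic_same_level; eauto.
  - destruct (Rlt_le_dec (d c1 c2) (powerRZ r (kw + 1 + 1))) as [Hclose | Hfar].
    + destruct (cone_point_of_close HX (kw + 1) k1 k2 c1 c2) as [u Hu]; auto; try lia.
      specialize (Hmaxw _ _ Hu). lia.
    + rewrite !powerRZ_succ in Hfar by lra.
      apply (Rbar_le_trans _ _ _ Hcoef), (Rbar_le_trans _ (d c1 c2)).
      * simpl. nra.
      * apply diam_ge; [left | right]; now apply (ball_of_center Hd).
Qed.
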